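(* Let $p$ be a lattice norm on $\mathbb{R}^2$ with $p((1,0))=p((0,1))=1$, let $\Phi$ be an Orlicz function with $a(\Phi)>0$, and assume that either $\mu$ is non-atomic with $\mu(\Omega)=\infty$, or $\Omega=\mathbb{N}$, $\Sigma=2^{\mathbb{N}}$ and $\mu$ is the counting measure. Then $(L^\Phi(\mu),\|\cdot\|_{\Phi,p})$ is neither strictly monotone nor strictly convex.
   Context: $(\Omega,\Sigma,\mu)$ is a $\sigma$-finite complete measure space, $L^0$ the space of (classes of a.e. equal) real measurable functions, ordered pointwise a.e. An Orlicz function is a function $\Phi:\mathbb{R}\to[0,\infty)$ which is convex, even, vanishes at $0$ and is not identically zero; $a(\Phi)=\sup\{u\ge0:\Phi(u)=0\}$. $I_\Phi(x)=\int_\Omega\Phi(x(t))\,d\mu\in[0,+\infty]$; $L^\Phi(\mu)=\{x\in L^0: I_\Phi(\lambda x)<\infty\text{ for some }\lambda>0\}$. A lattice norm on $\mathbb{R}^2$ is a norm $p$ with $p((u,v))\le p((u',v'))$ whenever $|u|\le|u'|,|v|\le|v'|$; $\|x\|_{\Phi,p}=\inf_{k>0}\frac1k p((1,I_\Phi(kx)))$ with the convention $p((1,+\infty))=+\infty$. A normed lattice is strictly monotone if $0\le x\le y$, $x\ne y$ imply $\|x\|<\|y\|$; it is strictly convex if $\|x\|=\|y\|=1$, $x\neq y$ imply $\|(x+y)/2\|<1$. *)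

From HB Require Import structures.
From mathcomp Require Import all_boot all_order all_algebra.
From mathcomp Require Import all_classical all_reals all_analysis.
Set Implicit Arguments. Unset Strict Implicit. Unset Printing Implicit Defensive.
Import Order.TTheory GRing.Theory Num.Theory.
Local Open Scope classical_set_scope.
Local Open Scope ring_scope.

Definition lattice_norm (R : realType) (p : R * R -> R) : Prop :=
  [/\ (forall z, 0 <= p z),
      (forall z, p z = 0 -> z = (0, 0)),
      (forall a z, p (a * z.1, a * z.2) = `|a| * p z),
      (forall z w, p (z.1 + w.1, z.2 + w.2) <= p z + p w) &
      (forall u v u' v', `|u| <= `|u'| -> `|v| <= `|v'| -> p (u, v) <= p (u', v'))].

Definition orlicz (R : realType) (Phi : R -> R) : Prop :=
  [/\ (forall u, 0 <= Phi u),
      (forall x y t, 0 <= t <= 1 ->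
         Phi (t * x + (1 - t) * y) <= t * Phi x + (1 - t) * Phi y),
      (forall u, Phi (- u) = Phi u),
      Phi 0 = 0 &
      (exists u, Phi u != 0)].

Definition a_orlicz (R : realType) (Phi : R -> R) : \bar R :=
  ereal_sup [set (u%:E) | u in [set u : R | 0 <= u /\ Phi u = 0]].

Section orlicz_space.
Context {d : measure_display} {T : measurableType d} {R : realType}.
Variable mu : {measure set T -> \bar R}.

Definition I_Phi (Phi : R -> R) (x : T -> R) : \bar R :=
  (\int[mu]_(t in [set: T]) (Phi (x t))%:E)%E.

Definition in_LPhi (Phi : R -> R) (x : T -> R) : Prop :=
  measurable_fun [set: T] x /\
  exists lam : R, 0 < lam /\ (I_Phi Phi (fun t => (lam * x t)%R) < +oo)%E.

Definition p_one (p : R * R -> R) (v : \bar R) : \bar R :=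
  match v with
  | EFin r => (p (1, r))%:E
  | _ => +oo%E
  end.

Definition orlicz_norm (Phi : R -> R) (p : R * R -> R) (x : T -> R) : \bar R :=
  ereal_inf [set ((k^-1)%:E * p_one p (I_Phi Phi (fun t => (k * x t)%R)))%E
            | k in [set k : R | 0 < k]].

(* strict monotonicity of (L^Phi, ||.||_{Phi,p}); elements are a.e.-classes *)
Definition strictly_monotone (Phi : R -> R) (p : R * R -> R) : Prop :=
  forall x y : T -> R, in_LPhi Phi x -> in_LPhi Phi y ->
    {ae mu, forall t, 0 <= x t} -> {ae mu, forall t, x t <= y t} ->
    ~ {ae mu, forall t, x t = y t} ->
    (orlicz_norm Phi p x < orlicz_norm Phi p y)%E.

Definition strictly_convex (Phi : R -> R) (p : R * R -> R) : Prop :=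
  forall x y : T -> R, in_LPhi Phi x -> in_LPhi Phi y ->
    orlicz_norm Phi p x = 1%E -> orlicz_norm Phi p y = 1%E ->
    ~ {ae mu, forall t, x t = y t} ->
    (orlicz_norm Phi p (fun t => ((x t + y t) / 2)%R) < 1)%E.

Definition nonatomic : Prop :=
  forall A, measurable A -> (0 < mu A)%E ->
    exists B, [/\ measurable B, B `<=` A, (0 < mu B)%E & (mu B < mu A)%E].

End orlicz_space.

(* Let a = a(Phi) > 0, so that Phi vanishes on [0, a) and at no point beyond a.
   Take a set A of positive measure whose complement has infinite measure, and let
   x equal some al in [0, a] on A and a off A. Then I_Phi(k x) = 0 for 0 < k < 1
   and I_Phi(k x) = +oo for k > 1, so ||x||_{Phi,p} = p((1,0)) = 1 whatever al is.
   The choices al = a/2 and al = a give x <= y of norm 1 that differ on A, and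
   their midpoint (al = 3a/4) has norm 1 as well. *)
From HB Require Import structures.
From mathcomp Require Import all_boot all_order all_algebra.
From mathcomp Require Import all_classical all_reals all_analysis.
From mathcomp.algebra_tactics Require Import lra.
Set Implicit Arguments. Unset Strict Implicit. Unset Printing Implicit Defensive.
Import Order.TTheory GRing.Theory Num.Theory.
Import measurable_realfun.
Local Open Scope classical_set_scope.
Local Open Scope ring_scope.

Lemma orlicz_zero_le (R : realType) (Phi : R -> R) (u v : R) : orlicz Phi ->
  0 <= v <= u -> Phi u = 0 -> Phi v = 0.
Proof.
case=> Phi_ge0 Phi_convex _ Phi0 _ /andP[v_ge0 vu] Phiu.
have [u0|u_neq0] := eqVneq u 0.
  by have -> : v = 0 by apply/le_anti; rewrite v_ge0 -u0 vu.
have u_gt0 : 0 < u by rewrite lt_neqAle eq_sym u_neq0 (le_trans v_ge0 vu).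
have vu01 : 0 <= v / u <= 1.
  by rewrite divr_ge0 ?(ltW u_gt0) //= ler_pdivrMr // mul1r.
have := Phi_convex u 0 (v / u) vu01.
rewrite Phiu Phi0 !mulr0 !addr0 mulrAC -mulrA divff // mulr1 => Phiv_le0.
by apply/le_anti; rewrite Phiv_le0 Phi_ge0.
Qed.

Lemma a_orlicz_gt0_zeros (R : realType) (Phi : R -> R) : orlicz Phi ->
  (0 < a_orlicz Phi)%E ->
  exists a : R, [/\ 0 < a,
    (forall u, 0 <= u < a -> Phi u = 0) &
    (forall u, 0 <= u -> Phi u = 0 -> u <= a)].
Proof.
move=> PhiO a_gt0; have [Phi_ge0 _ Phi_even _ [u0 Phiu0]] := PhiO.
have a_le_u0 : (a_orlicz Phi <= `|u0|%:E)%E.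
  apply: ge_ereal_sup => _ [u [u_ge0 Phiu] <-]; rewrite lee_fin leNgt.
  apply/negP => u0_lt_u; move/negP: Phiu0; apply; apply/eqP.
  have -> : Phi u0 = Phi `|u0| by case: (ler0P u0); rewrite ?Phi_even.
  by apply: (orlicz_zero_le PhiO _ Phiu); rewrite normr_ge0 ltW.
have a_fin : a_orlicz Phi \is a fin_num.
  by rewrite ge0_fin_numE ?(ltW a_gt0) // (le_lt_trans a_le_u0) ?ltry.
exists (fine (a_orlicz Phi)); split.
- by rewrite -lte_fin fineK.
- move=> u /andP[u_ge0 ua].
  have : (u%:E < a_orlicz Phi)%E by rewrite -(fineK a_fin) lte_fin.
  move/ereal_sup_gt => [_ [v [_ Phiv] <-]]; rewrite lte_fin => uv.
  by apply: (orlicz_zero_le PhiO _ Phiv); rewrite u_ge0 ltW.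
- move=> u u_ge0 Phiu; rewrite -lee_fin fineK //.
  by apply: ereal_sup_ubound; exists u.
Qed.

Section step_function.
Context {d : measure_display} {T : measurableType d} {R : realType}.
Variable mu : {measure set T -> \bar R}.
Variable A : set T.
Hypothesis mA : measurable A.

Definition stepf (al c : R) : T -> R := fun t => if t \in A then al else c.

Lemma measurable_stepf al c : measurable_fun [set: T] (stepf al c).
Proof.
have -> : stepf al c = (fun t => c + (al - c) * \1_A t).
  apply/funext => t; rewrite /stepf indicE.
  by case: (t \in A); rewrite /= ?mulr1 ?mulr0 ?addr0 // addrC subrK.
apply: measurable_funD; first exact: measurable_cst.
by apply: measurable_funM; [exact: measurable_cst | exact: measurable_indic].
Qed.

Hypothesis muCA : mu (~` A) = +oo%E.

Lemma I_Phi_stepf (Phi : R -> R) (al c k : R) : orlicz Phi ->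
  0 <= al <= c -> 0 < k ->
  I_Phi mu Phi (fun t => k * stepf al c t) =
    if Phi (k * c) == 0 then 0%E else +oo%E.
Proof.
move=> PhiO /andP[al_ge0 alc] k_gt0; have [Phi_ge0 _ _ _ _] := PhiO.
rewrite /I_Phi; case: eqP => Phikc.
  apply: integral0_eq => t _; congr EFin.
  apply: (orlicz_zero_le PhiO _ Phikc); rewrite /stepf.
  have c_ge0 := le_trans al_ge0 alc.
  by case: (t \in A); rewrite ler_pM2l // ?alc ?lexx andbT mulr_ge0 // ltW.
apply/eqP; rewrite eq_le leey /=.
have mCA : measurable (~` A) by exact: measurableC.
have meas_Phi : measurable_fun [set: T] (fun t => (Phi (k * stepf al c t))%:E).
  have -> : (fun t => (Phi (k * stepf al c t))%:E) =
      EFin \o stepf (Phi (k * al)) (Phi (k * c)).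
    by apply/funext => t; rewrite /stepf /=; case: (t \in A).
  by apply/measurable_EFinP; exact: measurable_stepf.
have := ge0_subset_integral mu mCA measurableT meas_Phi
  (fun t _ => Phi_ge0 _) (@subsetT _ _).
rewrite (@eq_integral _ _ _ mu (~` A) (cst (Phi (k * c))%:E)); last first.
  by move=> t; rewrite in_setC /stepf => /negbTE ->.
rewrite integral_cst // muCA gt0_muley // lte_fin lt_neqAle eq_sym Phi_ge0.
by rewrite andbT; apply/eqP.
Qed.

Lemma orlicz_norm_stepf (Phi : R -> R) (p : R * R -> R) (a al : R) :
  orlicz Phi -> p (1, 0) = 1 -> 0 < a ->
  (forall u, 0 <= u < a -> Phi u = 0) ->
  (forall u, 0 <= u -> Phi u = 0 -> u <= a) ->
  0 <= al <= a -> orlicz_norm mu Phi p (stepf al a) = 1%E.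
Proof.
move=> PhiO p10 a_gt0 Phi_below Phi_above ala.
apply/le_anti/andP; split.
- apply/lee_addgt0Pr => e e_gt0.
  pose k := (1 + e)^-1.
  have k_gt0 : 0 < k by rewrite invr_gt0 addr_gt0.
  have -> : (1%E + e%:E = (k^-1)%:E *
      p_one p (I_Phi mu Phi (fun t => (k * stepf al a t)%R)))%E.
    rewrite I_Phi_stepf // Phi_below ?eqxx /= ?p10 ?mule1 ?invrK //.
    by rewrite mulr_ge0 ?ltW //= ltr_pdivrMl ?addr_gt0 // ltr_pMl // ltrDl.
  by apply: ereal_inf_lbound; exists k.
- apply: le_ereal_inf_tmp => _ [k k_gt0 <-]; rewrite I_Phi_stepf //.
  case: eqP => Phika /=; last by rewrite gt0_muley ?leey // lte_fin invr_gt0.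
  have k_le1 : k <= 1.
    by rewrite -(ler_pM2r a_gt0) mul1r Phi_above // mulr_ge0 ?ltW.
  by rewrite p10 mule1 lee_fin invf_ge1.
Qed.

End step_function.

Lemma orlicz_not_strictly_monotone_convex {d : measure_display}
  {T : measurableType d} {R : realType} (mu : {measure set T -> \bar R})
  (A : set T) (p : R * R -> R) (Phi : R -> R) :
  measurable A -> (0 < mu A)%E -> mu (~` A) = +oo%E -> p (1, 0) = 1 ->
  orlicz Phi -> (0 < a_orlicz Phi)%E ->
  ~ strictly_monotone mu Phi p /\ ~ strictly_convex mu Phi p.
Proof.
move=> mA muA_gt0 muCA p10 PhiO a_gt0.
have [a [a_pos Phi_below Phi_above]] := a_orlicz_gt0_zeros PhiO a_gt0.
have norm1 al : 0 <= al <= a -> orlicz_norm mu Phi p (stepf A al a) = 1%E.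
  exact: orlicz_norm_stepf.
have inLPhi al : 0 <= al <= a -> in_LPhi mu Phi (stepf A al a).
  move=> ala; split; first exact: measurable_stepf.
  have half_a : 0 <= 1 / 2 * a < a by apply/andP; split; lra.
  exists (1 / 2); split; first lra.
  by rewrite I_Phi_stepf // ?Phi_below // ?eqxx ?ltry //; lra.
pose x := stepf A (a / 2) a; pose y := stepf A a a.
have xa : 0 <= a / 2 <= a by apply/andP; split; lra.
have ya : 0 <= a <= a by rewrite lexx ltW.
have x_neq_y : ~ {ae mu, forall t, x t = y t}.
  move=> [N [mN muN0 xyN]].
  have AN : A `<=` N.
    by move=> t At; apply: xyN; rewrite /= /x /y /stepf mem_set //; lra.
  have muA_le_muN := le_measure mu (mem_set mA) (mem_set mN) AN.
  by move: muA_gt0; rewrite ltNge -muN0 muA_le_muN.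
split=> [mono|conv].
- have x_ge0 : {ae mu, forall t, 0 <= x t}.
    by apply: aeW => t; rewrite /x /stepf; case: (t \in A); lra.
  have x_le_y : {ae mu, forall t, x t <= y t}.
    by apply: aeW => t; rewrite /x /y /stepf; case: (t \in A); lra.
  have := mono x y (inLPhi _ xa) (inLPhi _ ya) x_ge0 x_le_y x_neq_y.
  by rewrite norm1 // norm1 // ltxx.
- have := conv x y (inLPhi _ xa) (inLPhi _ ya) (norm1 _ xa) (norm1 _ ya) x_neq_y.
  have -> : (fun t => (x t + y t) / 2) = stepf A ((a / 2 + a) / 2) a.
    by apply/funext => t; rewrite /x /y /stepf; case: (t \in A) => //; lra.
  by rewrite norm1 ?ltxx //; apply/andP; split; lra.
Qed.

Lemma nonatomic_infinite_split {d : measure_display} {T : measurableType d}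
  {R : realType} (mu : {measure set T -> \bar R}) :
  nonatomic mu -> mu [set: T] = +oo%E ->
  exists B, [/\ measurable B, (0 < mu B)%E & mu (~` B) = +oo%E].
Proof.
move=> nonat muT.
have [B [mB _ muB_gt0 muB_lt]] := nonat [set: T] measurableT ltac:(by rewrite muT).
exists B; split => //.
have muB_fin : mu B \is a fin_num.
  by rewrite ge0_fin_numE ?measure_ge0 // (lt_le_trans muB_lt (leey _)).
have muBC : (mu B + mu (~` B) = +oo)%E.
  by rewrite -measureU ?setICr ?setUv //; exact: measurableC.
by move: muBC; rewrite -(fineK muB_fin); case: (mu (~` B)).
Qed.

Lemma counting_set1_gt0 (R : realType) (n : nat) : (0 < @counting nat R [set n])%E.
Proof.
rewrite /counting; case: asboolP => [_|]; last by move/(_ (finite_set1 n)).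
by rewrite fset_set1 finmap.cardfs1 lte_fin ltr01.
Qed.

Lemma counting_setC1 (R : realType) (n : nat) :
  @counting nat R (~` [set n]) = +oo%E.
Proof.
rewrite /counting; case: asboolP => // finC.
by exfalso; apply: infinite_nat; rewrite -(setUv [set n]) finite_setU.
Qed.

Theorem corollary2 :
  (forall (R : realType) (p : R * R -> R) (Phi : R -> R)
     (d : measure_display) (T : measurableType d)
     (mu : {measure set T -> \bar R}),
     lattice_norm p -> p (1, 0) = 1 -> p (0, 1) = 1 ->
     orlicz Phi -> (0 < a_orlicz Phi)%E ->
     sigma_finite [set: T] mu -> measure_is_complete mu ->
     nonatomic mu -> mu [set: T] = +oo%E ->
     ~ strictly_monotone mu Phi p /\ ~ strictly_convex mu Phi p)
  /\
  (forall (R : realType) (p : R * R -> R) (Phi : R -> R),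
     lattice_norm p -> p (1, 0) = 1 -> p (0, 1) = 1 ->
     orlicz Phi -> (0 < a_orlicz Phi)%E ->
     ~ strictly_monotone (@counting nat R) Phi p /\
     ~ strictly_convex (@counting nat R) Phi p).
Proof.
split.
- move=> R p Phi d T mu _ p10 _ PhiO a_gt0 _ _ nonat muT.
  have [B [mB muB_gt0 muCB]] := nonatomic_infinite_split nonat muT.
  exact: (orlicz_not_strictly_monotone_convex mB).
- move=> R p Phi _ p10 _ PhiO a_gt0.
  apply: (@orlicz_not_strictly_monotone_convex _ _ _ _ [set 0%N]) => //.
  + exact: counting_set1_gt0.
  + exact: counting_setC1.
Qed.
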